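(* Let $n\ge 3$ and $k\ge 1$, and let $H\in\mathcal{H}_k$. Then \[ \Gamma_{\rm S}(C_n,H)=kn+\left\lceil \frac{n}{3}\right\rceil . \]
   Context: $C_n$ is the cycle on $n$ vertices; $\gamma$ is the domination number. For $k\ge 1$, $\mathcal{H}_k$ is the class of all finite graphs $H$ with the following two properties: (a) $\gamma(H)=k+1$ and $\gamma(H-v)=k$ for every vertex $v\in V(H)$; (b) for all $x,y\in V(H)$ (where $x=y$ is allowed) there exists a minimum dominating set of $H$ containing both $x$ and $y$. For graphs $G,H$ and a function $f\colon V(G)\to V(H)$, the Sierpiński product $G\otimes_f H$ is the graph with vertex set $V(G)\times V(H)$ and edges of two types: (type 1) $(g,h)(g,h')$ for every $g\in V(G)$ and every edge $hh'\in E(H)$; (type 2) $(g,f(g'))(g',f(g))$ for every edge $gg'\in E(G)$. $\Gamma_{\rm S}(G,H)=\max_{f}\gamma(G\otimes_f H)$ over all functions $f\colon V(G)\to V(H)$. *)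

From mathcomp Require Import all_boot.
Set Implicit Arguments. Unset Strict Implicit. Unset Printing Implicit Defensive.

Record sgraph := SGraph {
  vert : finType;
  adj : rel vert;
  adj_sym : symmetric adj;
  adj_irr : irreflexive adj }.

Definition dominating (G : sgraph) (D : {set vert G}) : bool :=
  [forall x, (x \in D) || [exists y in D, adj y x]].

(* domination number: minimum size of a dominating set (the whole vertex
   set is always dominating, so #|V| is a valid default). *)
Definition gamma (G : sgraph) : nat :=
  \big[minn/#|vert G|]_(D : {set vert G} | dominating D) #|D|.

Definition min_dom_set (G : sgraph) (D : {set vert G}) : bool :=
  dominating D && (#|D| == gamma G).

Definition del_type (G : sgraph) (v : vert G) : finType :=
  {x : vert G | x != v}.

Definition del_adj (G : sgraph) (v : vert G) : rel (del_type v) :=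
  fun x y => adj (val x) (val y).

Lemma del_adj_sym (G : sgraph) (v : vert G) : symmetric (@del_adj G v).
Proof. by move=> x y; rewrite /del_adj adj_sym. Qed.

Lemma del_adj_irr (G : sgraph) (v : vert G) : irreflexive (@del_adj G v).
Proof. by move=> x; rewrite /del_adj adj_irr. Qed.

Definition del_vertex (G : sgraph) (v : vert G) : sgraph :=
  SGraph (@del_adj_sym G v) (@del_adj_irr G v).

Definition in_Hk (k : nat) (H : sgraph) : Prop :=
  gamma H = k.+1 /\
  (forall v : vert H, gamma (del_vertex v) = k) /\
  (forall x y : vert H, exists D : {set vert H},
      min_dom_set D /\ x \in D /\ y \in D).

(* The cycle C_n on vertex set 'I_n (intended for n >= 3). *)
Definition cyc_adj (n : nat) : rel 'I_n :=
  fun i j => (j == (i.+1 %% n) :> nat) || (i == (j.+1 %% n) :> nat) .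

Definition cyc_adj' (n : nat) : rel 'I_n :=
  fun i j => (i != j) && cyc_adj i j.

Lemma cyc_adj'_sym n : symmetric (@cyc_adj' n).
Proof. by move=> i j; rewrite /cyc_adj' /cyc_adj eq_sym orbC. Qed.

Lemma cyc_adj'_irr n : irreflexive (@cyc_adj' n).
Proof. by move=> i; rewrite /cyc_adj' eqxx. Qed.

Definition cycle_graph (n : nat) : sgraph :=
  SGraph (@cyc_adj'_sym n) (@cyc_adj'_irr n).

Definition sp_adj (G H : sgraph) (f : vert G -> vert H)
  : rel (vert G * vert H)%type :=
  fun p q =>
    ((p.1 == q.1) && adj p.2 q.2) ||
    (adj p.1 q.1 && (p.2 == f q.1) && (q.2 == f p.1)).

Lemma sp_adj_sym G H f : symmetric (@sp_adj G H f).
Proof.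
move=> p q; rewrite /sp_adj eq_sym (adj_sym p.2) (adj_sym p.1); congr orb.
by case: (adj q.1 p.1); case: (q.2 == f p.1); case: (p.2 == f q.1).
Qed.

Lemma sp_adj_irr G H f : irreflexive (@sp_adj G H f).
Proof. by move=> p; rewrite /sp_adj !adj_irr andbF. Qed.

Definition sierpinski (G H : sgraph) (f : vert G -> vert H) : sgraph :=
  SGraph (@sp_adj_sym G H f) (@sp_adj_irr G H f).

Definition GammaS (G H : sgraph) : nat :=
  \max_(f : {ffun vert G -> vert H}) gamma (sierpinski (fun g => f g)).

From mathcomp Require Import all_boot zify.
Set Implicit Arguments. Unset Strict Implicit. Unset Printing Implicit Defensive.

(* For H in H_k and any graph G of maximum degree at most 2,
   Gamma_S(G, H) = k |V(G)| + gamma(G).  For a constant f, a dominating set of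
   G (x)_f H has at least k vertices in every layer, and the layers with more
   than k vertices dominate G.  Conversely, for any f and any dominating set S
   of G, put in each layer of S a minimum dominating set of H containing the
   images of the (at most two) neighbours, and in every other layer g a
   dominating set of H - f(s) of size k, for a neighbour s of g in S.  The
   theorem then follows from gamma(C_n) = ceil(n/3). *)

Definition nbhd (G : sgraph) (x : vert G) : {set vert G} := [set y | adj x y].

Definition layer (A B : finType) (D : {set A * B}) (a : A) : {set B} :=
  [set b | (a, b) \in D].

Lemma card_layers (A B : finType) (D : {set A * B}) :
  #|D| = \sum_a #|layer D a|.
Proof.
rewrite -sum1_card big_mkcond /=.
rewrite (eq_bigr (fun p => (fun a b => if (a, b) \in D then 1 else 0) p.1 p.2)); last by case.
rewrite -(pair_bigA _ (fun a b => if (a, b) \in D then 1 else 0)) /=.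
apply: eq_bigr => a _; rewrite -sum1_card [RHS]big_mkcond /=.
by apply: eq_bigr => b _; rewrite inE.
Qed.

Lemma sum_add_mem (T : finType) (S : {set T}) k :
  \sum_(t : T) (k + (t \in S)) = k * #|T| + #|S|.
Proof.
rewrite big_split /= sum_nat_const cardE -cardE mulnC; congr (_ + _).
by rewrite -sum1_card [RHS]big_mkcond; apply: eq_bigr => t _; case: (t \in S).
Qed.

Lemma subset_pair (T : finType) (A : {set T}) (x0 : T) :
  #|A| <= 2 -> exists x y, A \subset [set x; y].
Proof.
rewrite cardE; case e: (enum A) => [|x [|y [|z s]]] //= _;
  [exists x0, x0 | exists x, x | exists x, y];
  by apply/subsetP => t; rewrite -mem_enum e !inE ?orbb.
Qed.

Lemma dominatingT (G : sgraph) : dominating [set: vert G].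
Proof. by apply/forallP => x; rewrite inE. Qed.

Lemma gamma_le (G : sgraph) (D : {set vert G}) : dominating D -> gamma G <= #|D|.
Proof.
move=> domD; rewrite /gamma.
have : D \in index_enum {set vert G} by rewrite mem_index_enum.
elim: (index_enum _) => [//|B r IHr]; rewrite inE big_cons => /orP [/eqP <-|/IHr le].
- by rewrite domD geq_minl.
- by case: ifP => _ //; rewrite geq_min le orbT.
Qed.

Lemma gamma_ge (G : sgraph) m :
  (forall D : {set vert G}, dominating D -> m <= #|D|) -> m <= gamma G.
Proof.
move=> le_m; rewrite /gamma; apply: (big_ind (fun x => m <= x)).
- by rewrite -cardsT; apply: le_m; apply: dominatingT.
- by move=> x y mx my; rewrite leq_min mx my.
- by move=> D domD; apply: le_m.
Qed.

Lemma gamma_witness (G : sgraph) :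
  exists2 D : {set vert G}, dominating D & #|D| = gamma G.
Proof.
rewrite /gamma; apply: (big_ind (fun x => exists2 D : {set vert G}, dominating D & #|D| = x)).
- by exists setT; [apply: dominatingT | rewrite cardsT].
- move=> x y [D1 h1 e1] [D2 h2 e2]; rewrite /minn; case: ltnP => _.
  + by exists D1.
  + by exists D2.
- by move=> D domD; exists D.
Qed.

Lemma gamma_le_card (G : sgraph) : gamma G <= #|vert G|.
Proof. by rewrite -cardsT; apply/gamma_le/dominatingT. Qed.

Lemma card_le_dominating (G : sgraph) d (D : {set vert G}) :
  (forall x : vert G, #|nbhd x| <= d) -> dominating D -> #|vert G| <= d.+1 * #|D|.
Proof.
move=> deg_d /forallP domD.
pose N (t : vert G) := t |: nbhd t.
have cardN t : #|N t| <= d.+1 by rewrite (leq_trans (leq_card_setU _ _)) // cards1 ltnS deg_d.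
have covered x : exists2 t, t \in D & x \in N t.
  case/orP: (domD x) => [xD|/existsP [t /andP [tD adj_tx]]].
    by exists x; rewrite // !inE eqxx.
  by exists t; rewrite // !inE adj_tx orbT.
apply: (@leq_trans (\sum_(x : vert G) 1)); first by rewrite sum1_card.
apply: (@leq_trans (\sum_x \sum_(t in D) (x \in N t))).
  apply: leq_sum => x _; have [t tD xNt] := covered x.
  by rewrite (bigD1 t) //= xNt.
rewrite exchange_big /= mulnC -sum_nat_const; apply: leq_sum => t _.
by rewrite (leq_trans _ (cardN t)) // -sum1_card [X in _ <= X]big_mkcond.
Qed.

Lemma gamma_del_le (H : sgraph) (v : vert H) (D : {set vert H}) :
  v \notin D -> (forall h, h != v -> (h \in D) || [exists y in D, adj y h]) ->
  gamma (del_vertex v) <= #|D|.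
Proof.
move=> vD domD; pose D' : {set del_type v} := [set x | val x \in D].
apply: (@leq_trans #|D'|).
  apply: gamma_le; apply/forallP => x.
  case/orP: (domD (val x) (valP x)) => [xD|/existsP [y /andP [yD adj_yx]]].
    by rewrite inE xD.
  have yv : y != v by apply: contraNneq vD => <-.
  by apply/orP; right; apply/existsP; exists (exist _ y yv); rewrite inE yD.
rewrite -(card_imset _ val_inj); apply: subset_leq_card.
by apply/subsetP => h /imsetP [x]; rewrite inE => xD ->.
Qed.

Lemma sierpinski_dominated_in_layer (G H : sgraph) (f : vert G -> vert H)
    (D : {set vert (sierpinski f)}) g h :
  (h \in layer D g) || [exists y in layer D g, adj y h] ->
  ((g, h) \in D) || [exists q in D, @adj (sierpinski f) q (g, h)].
Proof.
case/orP => [|/existsP [y /andP [yD adj_yh]]]; first by rewrite inE => ->.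
apply/orP; right; apply/existsP; exists (g, y); move: yD; rewrite inE => ->.
by rewrite /= /sp_adj /= eqxx adj_yh.
Qed.

Section ConstantLower.
Variables (G H : sgraph) (k : nat) (v : vert H).
Hypotheses (gammaH : k < gamma H) (gammaHv : k <= gamma (del_vertex v)).
Variable f : vert G -> vert H.
Hypothesis f_const : forall g, f g = v.
Variable D : {set vert (sierpinski f)}.
Hypothesis domD : dominating D.

Lemma layer_dominates_off_v g h :
  h != v -> (h \in layer D g) || [exists y in layer D g, adj y h].
Proof.
move=> hv; case/orP: (forallP domD (g, h)) => [gh_in|/existsP [[g' y] /andP [yD]]].
  by rewrite inE gh_in.
rewrite /= /sp_adj /= => /orP [/andP [/eqP <- adj_yh]|/andP [_ /eqP h_eq]].
  by apply/orP; right; apply/existsP; exists y; rewrite inE yD.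
by rewrite h_eq f_const eqxx in hv.
Qed.

Lemma layer_dominating g :
  (forall h, (h \in layer D g) || [exists y in layer D g, adj y h]) -> k < #|layer D g|.
Proof. by move=> domg; apply: (leq_trans gammaH); apply/gamma_le/forallP. Qed.

Lemma layer_gt_mem_v g : v \in layer D g -> k < #|layer D g|.
Proof.
move=> vg; apply: layer_dominating => h.
by case: (eqVneq h v) => [->|hv]; [rewrite vg | apply: layer_dominates_off_v].
Qed.

Lemma layer_ge g : k <= #|layer D g|.
Proof.
case vg: (v \in layer D g); first exact/ltnW/layer_gt_mem_v.
by apply: (leq_trans gammaHv); apply: gamma_del_le; [rewrite vg | apply: layer_dominates_off_v].
Qed.

(* A layer of size k misses v and cannot dominate (g, v) from inside, so a
   neighbouring layer contains v. *)
Lemma small_layer_nbr g :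
  #|layer D g| <= k -> exists2 g', adj g' g & v \in layer D g'.
Proof.
move=> small; have vg : v \notin layer D g.
  by apply: contraL small => /layer_gt_mem_v; rewrite ltnNge.
case/orP: (forallP domD (g, v)) => [gv_in|/existsP [[g' y] /andP [yD]]].
  by move: vg; rewrite inE gv_in.
rewrite /= /sp_adj /= !f_const => /orP [/andP [/eqP eg adj_yv]|/andP [/andP [adj_g' /eqP <-] _]].
  have : k < #|layer D g|.
    apply: layer_dominating => h; case: (eqVneq h v) => [->|hv].
      by apply/orP; right; apply/existsP; exists y; rewrite inE -eg yD.
    exact: layer_dominates_off_v.
  by rewrite ltnNge small.
by exists g'; rewrite // inE.
Qed.

Lemma card_ge_sierpinski_const : k * #|vert G| + gamma G <= #|D|.
Proof.
pose T : {set vert G} := [set g | k < #|layer D g|].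
have domT : dominating T.
  apply/forallP => g; rewrite inE; case: ltnP => //= small.
  have [g' adj_g' vg'] := small_layer_nbr small.
  by apply/existsP; exists g'; rewrite inE (layer_gt_mem_v vg') adj_g'.
rewrite card_layers (@leq_trans (k * #|vert G| + #|T|)) ?leq_add2l ?gamma_le //.
rewrite -sum_add_mem; apply: leq_sum => g _; rewrite inE.
by case: ltnP => [|_]; [rewrite addn1 | rewrite addn0 layer_ge].
Qed.

End ConstantLower.

Lemma gamma_sierpinski_const_ge (G H : sgraph) k (v : vert H) (f : vert G -> vert H) :
  k < gamma H -> k <= gamma (del_vertex v) -> (forall g, f g = v) ->
  k * #|vert G| + gamma G <= gamma (sierpinski f).
Proof. by move=> gH gHv f_const; apply/gamma_ge/(card_ge_sierpinski_const gH gHv f_const). Qed.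

Section Upper.
Variables (G H : sgraph) (k : nat).
Hypothesis HHk : in_Hk k H.
Hypothesis deg2 : forall x : vert G, #|nbhd x| <= 2.
Variables (f : vert G -> vert H) (S : {set vert G}).
Hypothesis domS : dominating S.

Let hub (g : vert G) : vert G := odflt g [pick t in S | adj t g].

Lemma hubP g : g \notin S -> hub g \in S /\ adj (hub g) g.
Proof.
move=> gS; rewrite /hub; case: pickP => [t /andP [] //|none].
case/orP: (forallP domS g) => [gS'|/existsP [t /andP [tS adj_tg]]].
  by rewrite gS' in gS.
by have := none t; rewrite tS adj_tg.
Qed.

Let full (g : vert G) : {set vert H} :=
  odflt set0 [pick B | min_dom_set B && (f @: nbhd g \subset B)].

Let punctured (w : vert H) : {set vert H} :=
  val @: odflt set0 [pick B : {set vert (del_vertex w)} | dominating B && (#|B| == k)].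

Lemma fullP g : [/\ dominating (full g), #|full g| = k.+1 & f @: nbhd g \subset full g].
Proof.
have [_ [_ pairs]] := HHk.
have [x [y sub_xy]] : exists x y, f @: nbhd g \subset [set x; y].
  by apply: (subset_pair (f g)); rewrite (leq_trans (leq_imset_card _ _)).
rewrite /full; case: pickP => [B /andP [/andP [domB /eqP ->] subB]|none].
  by case: HHk.
have [B [minB [xB yB]]] := pairs x y.
have := none B; rewrite minB (subset_trans sub_xy) //.
by apply/subsetP => z; rewrite !inE => /orP [] /eqP ->.
Qed.

Lemma puncturedP w :
  #|punctured w| = k /\
  forall h, h != w -> (h \in punctured w) || [exists y in punctured w, adj y h].
Proof.
rewrite /punctured; case: pickP => [B /andP [domB /eqP cardB]|none] /=.
  split; first by rewrite card_imset //; exact: val_inj.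
  move=> h hw; case/orP: (forallP domB (exist _ h hw)) => [hB|/existsP [y /andP [yB adj_yh]]].
    by rewrite (imset_f val hB).
  by apply/orP; right; apply/existsP; exists (val y); rewrite (imset_f val yB).
have [_ [gammaHw _]] := HHk; have [B domB cardB] := gamma_witness (del_vertex w).
by have := none B; rewrite domB cardB gammaHw eqxx.
Qed.

Let layer_of (g : vert G) : {set vert H} :=
  if g \in S then full g else punctured (f (hub g)).

(* The only vertex [(g, f (hub g))] missed by its own layer is dominated by
   [(hub g, f g)], since [f g] is the image of a neighbour of [hub g]. *)
Lemma sierpinski_le_card_dominating :
  gamma (sierpinski f) <= k * #|vert G| + #|S|.
Proof.
pose D : {set vert (sierpinski f)} := [set p | p.2 \in layer_of p.1].
have layerD g : layer D g = layer_of g by apply/setP => h; rewrite !inE.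
have -> : k * #|vert G| + #|S| = #|D|.
  rewrite card_layers -sum_add_mem; apply: eq_bigr => g _; rewrite layerD /layer_of.
  case: ifP => _; first by case: (fullP g) => _ -> _; rewrite addn1.
  by case: (puncturedP (f (hub g))) => -> _; rewrite addn0.
apply: gamma_le; apply/forallP => -[g h].
have [gS|gS] := boolP (g \in S).
  apply: sierpinski_dominated_in_layer; rewrite layerD /layer_of gS.
  by case: (fullP g) => /forallP.
case: (eqVneq h (f (hub g))) => [->|hw].
  have [hubS adj_hub] := hubP gS.
  apply/orP; right; apply/existsP; exists (hub g, f g).
  rewrite inE /= /layer_of hubS /sp_adj /= adj_hub !eqxx orbT andbT.
  by case: (fullP (hub g)) => _ _ /subsetP; apply; apply: imset_f; rewrite inE.
apply: sierpinski_dominated_in_layer; rewrite layerD /layer_of (negbTE gS).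
by case: (puncturedP (f (hub g))) => _; apply.
Qed.

End Upper.

Lemma GammaS_max_degree2 (G H : sgraph) k :
  in_Hk k H -> (forall x : vert G, #|nbhd x| <= 2) ->
  GammaS G H = k * #|vert G| + gamma G.
Proof.
move=> HHk deg2; apply/eqP; rewrite eqn_leq; apply/andP; split.
  apply/bigmax_leqP => f _; have [S domS <-] := gamma_witness G.
  exact: sierpinski_le_card_dominating.
have [gammaH [gammaHv _]] := HHk.
have [v _] : exists v : vert H, v \in predT.
  by apply/card_gt0P; rewrite (leq_trans _ (gamma_le_card H)) // gammaH.
apply: leq_trans (leq_bigmax [ffun _ => v]).
by apply: gamma_sierpinski_const_ge => [||g]; rewrite ?gammaH ?gammaHv ?ffunE.
Qed.

Lemma card_dvd3 n : #|[set i : 'I_n | 3 %| i]| = (n + 2) %/ 3.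
Proof.
rewrite -sum1_card big_mkcond (eq_bigr (fun i : 'I_n => nat_of_bool (3 %| i))) => [|i _].
  elim: n => [|n IHn]; first by rewrite big_ord0.
  by rewrite big_ord_recr /= IHn; lia.
by rewrite inE; case: (3 %| i).
Qed.

Lemma modn_succ i n : i < n -> i.+1 %% n = if i.+1 == n then 0 else i.+1.
Proof.
move=> lt_in; case: eqP => [->|ne]; first by rewrite modnn.
by rewrite modn_small //; lia.
Qed.

Section Cycle.
Variable m : nat.
Local Notation n := m.+1.

Lemma cyc_adj'E (i j : 'I_n) : cyc_adj' i j =
  (val i != val j) && ((val j == if i.+1 == n then 0 else i.+1) ||
                       (val i == if j.+1 == n then 0 else j.+1)).
Proof. by rewrite /cyc_adj' /cyc_adj !modn_succ. Qed.

Let csucc (g : 'I_n) : 'I_n := inord (if g.+1 == n then 0 else g.+1).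
Let cpred (g : 'I_n) : 'I_n := inord (if g == 0 :> nat then m else g.-1).

Lemma cycle_nbhd (t : vert (cycle_graph n)) : nbhd t \subset [set csucc t; cpred t].
Proof.
apply/subsetP => x; rewrite !inE /= cyc_adj'E -!val_eqE /= !inordK;
  have := ltn_ord t; have := ltn_ord x; do ! [case: eqP => /=]; lia.
Qed.

Lemma cycle_max_degree2 (t : vert (cycle_graph n)) : #|nbhd t| <= 2.
Proof. by rewrite (leq_trans (subset_leq_card (cycle_nbhd t))) // cards2; case: (_ != _). Qed.

(* [g] with [g = 1 mod 3] is dominated by [g - 1], and [g = 2 mod 3] by [g + 1],
   which is [0] when [g] is the last vertex. *)
Lemma cycle_dominating_dvd3 : @dominating (cycle_graph n) [set g : 'I_n | 3 %| g].
Proof.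
apply/forallP => g; rewrite inE; case: (boolP (3 %| val g)) => //= g3; apply/existsP.
exists (inord (if g %% 3 == 1 then g.-1 else if g.+1 < n then g.+1 else 0)).
have lt_gn := ltn_ord g; move: g3; rewrite inE /= cyc_adj'E /=.
by case: (g %% 3 =P 1) => ?; case: (ltnP g.+1 n) => ?; rewrite inordK /=;
  do ? [case: eqP => /=]; lia.
Qed.

Lemma gamma_cycle : gamma (cycle_graph n) = (n + 2) %/ 3.
Proof.
apply/eqP; rewrite eqn_leq -{1}(card_dvd3 n) (gamma_le cycle_dominating_dvd3) /=.
have [D domD <-] := gamma_witness (cycle_graph n).
have := card_le_dominating cycle_max_degree2 domD.
by rewrite card_ord; lia.
Qed.
End Cycle.

Theorem theorem3p5 (n k : nat) (H : sgraph) :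
  3 <= n -> 1 <= k -> in_Hk k H ->
  GammaS (cycle_graph n) H = k * n + (n + 2) %/ 3.
Proof.
case: n => [//|m] _ _ HHk.
by rewrite (GammaS_max_degree2 HHk (@cycle_max_degree2 m)) card_ord gamma_cycle.
Qed.
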